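(* Let $Q:\mathbb{R}\to\mathbb{C}$ be a bounded function ($Q\in L^\infty(\mathbb{R})$, evaluated pointwise) and let $(u(z))_{z\in\mathbb{Z}}\subset\mathbb{C}$ with $u(z)=0$ for all $z<0$ and $u(0)\neq0$. Let $R(\xi):=\sum_{z\in\mathbb{Z}}Q(\xi-z)u(z)$ and let $\gamma\{\ddot u_+\}$ be as in the context. Then $$Q(\xi)=\frac{1}{u(0)}\sum_{z\in\mathbb{Z}}R(\xi-z)\,\gamma\{\ddot u_+\}(z)\qquad(\xi\in\mathbb{R})$$ whenever one of the following holds: (1) there exists $\xi_0\in\mathbb{R}$ with $Q(\xi)=0$ for all $\xi<\xi_0$; (2) $Q$ is non-decreasing on $\mathbb{R}$, $\sum_{z\in\mathbb{Z}}|u(z)|<\infty$, and $\sum_{z\in\mathbb{Z}}|\gamma\{\ddot u_+\}(z)\,Q(\xi-z)|<\infty$ for each $\xi\in\mathbb{R}$.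
   Context: Define $\ddot u_+(z):=\delta_{z,0}-\frac{u(z)}{u(0)}$ for $z\in\mathbb{Z}$ (where $\delta_{z,0}=1$ if $z=0$, else $0$). Discrete convolution powers: $\ddot u_+^{*0}(z):=\delta_{z,0}$ and $\ddot u_+^{*j}(z):=\sum_{y\in\mathbb{Z}}\ddot u_+(z-y)\ddot u_+^{*(j-1)}(y)$ for $j\ge1$ (finite sums since $\ddot u_+$ vanishes on negative integers). Let $\gamma\{\ddot u_+\}(z):=\sum_{j=0}^{z}\ddot u_+^{*j}(z)$ for $z\in\mathbb{Z}$ (empty sum $=0$, so $\gamma\{\ddot u_+\}(z)=0$ for $z<0$). *)

From mathcomp Require Import all_boot all_order all_algebra.
From mathcomp Require Import complex.
From mathcomp Require Import reals.
Set Implicit Arguments. Unset Strict Implicit. Unset Printing Implicit Defensive.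
Import Order.TTheory GRing.Theory Num.Theory.
Local Open Scope ring_scope.

Section Defs.
Variable R : realType.
Local Notation C := (complex R).

Definition series_to (a : nat -> C) (s : C) : Prop :=
  forall eps : R, 0 < eps -> exists N : nat, forall n : nat, (N <= n)%N ->
    `|\sum_(k < n) a k - s| < (eps%:C)%C.

Definition zsum_to (f : int -> C) (S : C) : Prop :=
  exists S1 S2 : C,
    series_to (fun k => f (Posz k)) S1 /\
    series_to (fun k => f (- (Posz k.+1))) S2 /\ S = S1 + S2.

Definition zabs_summable (f : int -> C) : Prop :=
  exists M : R, forall N : nat,
    \sum_(k < N) (`|f (Posz k)| + `|f (- (Posz k.+1))|) <= (M%:C)%C.

Definition uddp (u : int -> C) (z : int) : C :=
  (z == 0)%:R - u z / u 0.

(* discrete convolution power; the sum over y is finite: y ranges over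
   0..z since both factors vanish on negative integers *)
Fixpoint convpow (u : int -> C) (j : nat) (z : int) : C :=
  match j with
  | 0%N => (z == 0)%:R
  | j'.+1 => \sum_(0 <= k < `|z|%N.+1)
               (if (0 <= z) then uddp u (z - Posz k) * convpow u j' (Posz k) else 0)
  end.

Definition gammau (u : int -> C) (z : int) : C :=
  if (0 <= z) then \sum_(0 <= j < `|z|%N.+1) convpow u j z else 0.

End Defs.

From mathcomp Require Import all_boot all_order all_algebra.
From mathcomp Require Import complex.
From mathcomp Require Import reals.
From mathcomp Require Import zify.
Import Order.TTheory GRing.Theory Num.Theory.
Local Open Scope ring_scope.
Set Implicit Arguments. Unset Strict Implicit.

(* Put R(xi - k) = sum_m Q(xi - k - m) u(m) and truncate sum_k gamma(k) R(xi - k)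
   at k < N.  The terms with k + m < N regroup along antidiagonals into
   sum_(n < N) Q(xi - n) (gamma * u)(n), and gamma * u = u(0) delta, because
   gamma = sum_j ddot u_+^{*j} solves gamma = delta + ddot u_+ * gamma while
   u = u(0) (delta - ddot u_+); so this part is exactly u(0) Q(xi).  The remaining
   terms (k < N <= k + m) vanish in the limit: under (1) they are all zero for
   large N, under (2) they are dominated by w(k) |u(m)| with w summable, i.e. by a
   tail of the Cauchy product of two summable sequences. *)

Section ComplexSequences.
Variable R : realType.
Local Notation C := (complex R).

Definition cvg_to (s : nat -> C) (l : C) := forall e : C, 0 < e ->
  exists N, forall n, (N <= n)%N -> `|s n - l| < e.

Lemma cvg_to_cst (c : C) : cvg_to (fun=> c) c.
Proof. by move=> e e0; exists 0%N => n _; rewrite subrr normr0. Qed.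

Lemma eq_cvg_to s t l : (forall n, s n = t n) -> cvg_to s l -> cvg_to t l.
Proof. by move=> st hs e /hs[N hN]; exists N => n /hN; rewrite st. Qed.

Lemma series_to_partial_sums (a : nat -> C) l :
  cvg_to (fun n => \sum_(k < n) a k) l -> series_to a l.
Proof. by move=> cvg_a e e0; apply: cvg_a; rewrite ltcR. Qed.

Lemma eventually0_series_cvg (a : nat -> C) K : (forall m, (K <= m)%N -> a m = 0) ->
  cvg_to (fun n => \sum_(m < n) a m) (\sum_(m < K) a m).
Proof.
move=> a0 e e0; exists K => n Kn.
rewrite (big_ord_widen n a Kn) [X in _ - X]big_mkcond -sumrB big1 ?normr0 // => m _.
by case: ifP => [_|/negbT]; [rewrite subrr | rewrite -leqNgt => /a0->; rewrite subr0].
Qed.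

Lemma cvg_toD s t l m : cvg_to s l -> cvg_to t m ->
  cvg_to (fun n => s n + t n) (l + m).
Proof.
move=> hs ht e e0.
have e2 : 0 < e / 2 by rewrite divr_gt0 // ltr0n.
have [[N1 h1] [N2 h2]] := (hs _ e2, ht _ e2).
exists (maxn N1 N2) => n; rewrite geq_max => /andP[n1 n2].
rewrite opprD addrACA (splitr e); apply: le_lt_trans (ler_normD _ _) _.
by rewrite ltrD ?h1 ?h2.
Qed.

Lemma cvg_toMl (c : C) s l : cvg_to s l -> cvg_to (fun n => c * s n) (c * l).
Proof.
move=> hs e e0; have [->|c0] := eqVneq c 0.
  by exists 0%N => n _; rewrite !mul0r subrr normr0.
have [N hN] : exists N, forall n, (N <= n)%N -> `|s n - l| < e / `|c|.
  by apply: hs; rewrite divr_gt0 ?normr_gt0.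
exists N => n /hN; rewrite ltr_pdivlMr ?normr_gt0 //.
by rewrite -mulrBr normrM mulrC.
Qed.

Lemma cvg_toMr (c : C) s l : cvg_to s l -> cvg_to (fun n => s n * c) (l * c).
Proof. by move/(cvg_toMl c); rewrite mulrC; apply: eq_cvg_to => n; rewrite mulrC. Qed.

Lemma cvg_to_sum (K : nat) (s : nat -> nat -> C) (l : nat -> C) :
  (forall k, cvg_to (s k) (l k)) ->
  cvg_to (fun n => \sum_(k < K) s k n) (\sum_(k < K) l k).
Proof.
move=> h; elim: K => [|K IH].
  by rewrite big_ord0; apply: eq_cvg_to (cvg_to_cst 0) => n; rewrite big_ord0.
rewrite big_ord_recr; apply: eq_cvg_to (cvg_toD IH (h K)) => n.
by rewrite big_ord_recr.
Qed.

Lemma cvg_to_dist_le s l c (e : C) : cvg_to s l ->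
  (exists N, forall n, (N <= n)%N -> `|s n - c| <= e) -> `|l - c| <= e.
Proof.
move=> hs [N hN]; apply/ler_addgt0Pr => d /hs[N' hN'].
pose n := maxn N N'; apply: le_trans (ler_distD (s n) _ _) _.
by rewrite addrC lerD ?hN ?leq_maxl // distrC ltW // hN' // leq_maxr.
Qed.

Lemma nondecreasing_cvg_to (s : nat -> C) (B : C) :
  (forall n, s n \is Num.real) -> (forall n, s n <= s n.+1) ->
  (forall n, s n <= B) -> exists2 l, (forall n, s n <= l) & cvg_to s l.
Proof.
move=> sR sS sB; pose r n := complex.Re (s n).
have sE n : s n = (r n)%:C%C by rewrite RRe_real.
have rB n : r n <= complex.Re B by move: (sB n); rewrite lecE => /andP[].
have r_homo m n : (m <= n)%N -> r m <= r n.
  by move=> /(Order.NatMonotonyTheory.nondecnP sS); rewrite !sE lecR.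
pose E x := exists n, x = r n.
have r_le_sup n : r n <= sup E.
  by apply: ub_le_sup; [exists (complex.Re B) => _ [k ->] | exists n].
exists (sup E)%:C%C => [n|e e0]; first by rewrite sE lecR.
have eE : e = (complex.Re e)%:C%C by rewrite RRe_real ?gtr0_real.
have [_ [N ->] ltN] : exists2 y, E y & sup E - complex.Re e < y.
  by apply: sup_gt; [exists (r 0%N), 0%N | rewrite ltrBlDr ltrDl -ltcR -eE].
exists N => n Nn; rewrite sE -rmorphB normc_def /= expr0n /= addr0 sqrtr_sqr eE ltcR.
rewrite ler0_norm ?subr_le0 // opprB ltrBlDr -ltrBlDl.
exact: lt_le_trans ltN (r_homo _ _ Nn).
Qed.

End ComplexSequences.

Section NonnegSeries.
Variable R : realType.
Local Notation C := (complex R).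
Variables (b : nat -> C) (B : C).
Hypothesis b_ge0 : forall k, 0 <= b k.
Hypothesis sum_b_le : forall n, \sum_(k < n) b k <= B.

Lemma nneg_series_cvg :
  exists2 l, (forall n, \sum_(k < n) b k <= l) & cvg_to (fun n => \sum_(k < n) b k) l.
Proof.
apply: (nondecreasing_cvg_to _ _ sum_b_le) => n.
  by rewrite ger0_real ?sumr_ge0.
by rewrite big_ord_recr lerDl.
Qed.

Lemma nneg_series_segment_le j M : \sum_(j <= k < M) b k <= B.
Proof.
have [jM|Mj] := leqP j M; last first.
  by rewrite big_geq ?(ltnW Mj) //; move: (sum_b_le 0); rewrite big_ord0.
apply: le_trans (sum_b_le M); rewrite -(big_mkord xpredT).
by rewrite (big_cat_nat (leq0n j) jM) /= lerDr sumr_ge0.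
Qed.

Lemma nneg_series_tail_small (e : C) : 0 < e ->
  exists J, forall j M, (J <= j)%N -> \sum_(j <= k < M) b k <= e.
Proof.
move=> e0; have [l le_l /(_ e e0)[J hJ]] := nneg_series_cvg.
exists J => j M Jj; have [jM|Mj] := leqP j M; last by rewrite big_geq ?(ltnW Mj) // ltW.
have -> : \sum_(j <= k < M) b k = \sum_(k < M) b k - \sum_(k < j) b k.
  by rewrite -!(big_mkord xpredT) (big_cat_nat (leq0n j) jM) /= addrAC subrr add0r.
apply: le_trans (_ : l - \sum_(k < J) b k <= e).
  rewrite lerB // -!(big_mkord xpredT) (big_cat_nat (leq0n J) Jj) /=.
  by rewrite lerDl sumr_ge0.
have lJ : 0 <= l - \sum_(k < J) b k by rewrite subr_ge0.
by rewrite ltW // -(ger0_norm lJ) distrC hJ.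
Qed.

End NonnegSeries.

Section AbsSummable.
Variable R : realType.
Local Notation C := (complex R).

Lemma real_abs_summable_cvg (x : nat -> C) (B : C) :
  (forall k, x k \is Num.real) -> (forall n, \sum_(k < n) `|x k| <= B) ->
  exists l, cvg_to (fun n => \sum_(k < n) x k) l.
Proof.
move=> xR sum_le.
(* x = (x + |x|) - |x|, a difference of two nonnegative series. *)
have [p _ cvg_p] : exists2 p, (forall n, \sum_(k < n) (x k + `|x k|) <= p) &
    cvg_to (fun n => \sum_(k < n) (x k + `|x k|)) p.
  apply: (@nneg_series_cvg _ (fun k => x k + `|x k|) (B + B)) => [k|n].
    by rewrite addrC -[X in _ + X]opprK subr_ge0 -normrN real_ler_norm ?rpredN.
  by rewrite big_split lerD // (le_trans _ (sum_le n)) // ler_sum // => k _; exact: real_ler_norm.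
have [a _ cvg_a] := nneg_series_cvg (fun k => normr_ge0 (x k)) sum_le.
exists (p + -1 * a); apply: eq_cvg_to (cvg_toD cvg_p (cvg_toMl (-1) cvg_a)) => n.
by rewrite mulN1r -sumrB; apply: eq_bigr => k _; rewrite addrK.
Qed.

Lemma normc_Re_le (z : C) : `|(complex.Re z)%:C%C| <= `|z|.
Proof.
rewrite !normc_def /= expr0n /= addr0 lecR sqrtr_sqr -sqrtr_sqr.
by rewrite ler_wsqrtr // lerDl sqr_ge0.
Qed.

Lemma normc_Im_le (z : C) : `|(complex.Im z)%:C%C| <= `|z|.
Proof.
rewrite !normc_def /= expr0n /= addr0 lecR sqrtr_sqr -sqrtr_sqr.
by rewrite ler_wsqrtr // lerDr sqr_ge0.
Qed.

Lemma abs_summable_cvg (a : nat -> C) (B : C) :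
  (forall n, \sum_(k < n) `|a k| <= B) ->
  exists l, cvg_to (fun n => \sum_(k < n) a k) l.
Proof.
move=> sum_le.
have part_cvg (f : C -> R) : (forall z, `|(f z)%:C%C| <= `|z|) ->
    exists l, cvg_to (fun n => \sum_(k < n) (f (a k))%:C%C) l.
  move=> f_le; apply: (real_abs_summable_cvg (x := fun k => (f (a k))%:C%C) (B := B)) => [k|n].
    by apply/complex_realP; exists (f (a k)).
  by apply: le_trans (sum_le n); apply: ler_sum => k _.
have [[re cvg_re] [im cvg_im]] := (part_cvg _ normc_Re_le, part_cvg _ normc_Im_le).
exists (re + 'i%C * im); apply: eq_cvg_to (cvg_toD cvg_re (cvg_toMl 'i%C cvg_im)) => n.
by rewrite mulr_sumr -big_split; apply: eq_bigr => k _; rewrite [RHS]complexE.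
Qed.

End AbsSummable.

Section CornerSums.
Variable R : realType.
Local Notation C := (complex R).
Implicit Types (F : nat -> nat -> C) (w b : nat -> C).

Definition triangle_sum F N := \sum_(0 <= k < N) \sum_(0 <= m < N - k) F k m.

Definition corner_sum F N M := \sum_(0 <= k < N) \sum_(N - k <= m < M) F k m.

Definition corner_vanishing F := forall e : C, 0 < e -> exists N0, forall N M,
  (N0 <= N)%N -> (N <= M)%N -> `|corner_sum F N M| <= e.

Lemma sum_rows_split F N M : (N <= M)%N ->
  \sum_(k < N) \sum_(m < M) F k m = triangle_sum F N + corner_sum F N M.
Proof.
move=> NM; rewrite /triangle_sum /corner_sum -big_split big_mkord.
apply: eq_bigr => k _; rewrite -big_cat_nat ?big_mkord //.
exact: leq_trans (leq_subr k N) NM.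
Qed.

Lemma triangle_sumS F N :
  triangle_sum F N.+1 = triangle_sum F N + \sum_(0 <= k < N.+1) F k (N - k)%N.
Proof.
rewrite /triangle_sum big_nat_recr // [X in _ = _ + X]big_nat_recr //.
rewrite subSnn subnn big_nat1 addrA -big_split; congr (_ + _).
by apply: eq_big_nat => k /andP[_ kN]; rewrite subSn ?(ltnW kN) // big_nat_recr.
Qed.

Lemma triangle_sum_antidiag F N :
  triangle_sum F N = \sum_(0 <= n < N) \sum_(0 <= k < n.+1) F k (n - k)%N.
Proof.
elim: N => [|N IH]; first by rewrite /triangle_sum !big_geq.
by rewrite triangle_sumS IH [RHS]big_nat_recr.
Qed.

Lemma corner_vanishing_eventually0 F K :
  (forall k m, (K <= k + m)%N -> F k m = 0) -> corner_vanishing F.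
Proof.
move=> F0 e e0; exists K => N M KN _.
rewrite /corner_sum big1_seq ?normr0 ?ltW // => k; rewrite mem_index_iota.
move=> /andP[_ /andP[_ kN]]; rewrite big1_seq // => m; rewrite mem_index_iota.
by move=> /andP[_ /andP[Nm _]]; rewrite F0 // (leq_trans KN) // -leq_subLR.
Qed.

Lemma corner_sum_mul_small w b (W B : C) :
  (forall k, 0 <= w k) -> (forall n, \sum_(k < n) w k <= W) ->
  (forall k, 0 <= b k) -> (forall n, \sum_(k < n) b k <= B) ->
  forall e : C, 0 < e -> exists N0, forall N M, (N0 <= N)%N ->
  corner_sum (fun k m => w k * b m) N M <= e.
Proof.
move=> w_ge0 sum_w_le b_ge0 sum_b_le e e0.
have W0 : 0 <= W by move: (sum_w_le 0%N); rewrite big_ord0.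
have B0 : 0 <= B by move: (sum_b_le 0%N); rewrite big_ord0.
have d0 : 0 < W + B + 1 by rewrite ltr_wpDl // addr_ge0.
pose e' := e / (W + B + 1).
have e'0 : 0 < e' by rewrite divr_gt0.
have [J tail_b] := nneg_series_tail_small b_ge0 sum_b_le e'0.
have [K tail_w] := nneg_series_tail_small w_ge0 sum_w_le e'0.
exists (J + K)%N => N M JKN.
(* For k < N - J the inner sum is a tail of b; for N - J <= k < N the outer sum
   is a tail of w. *)
rewrite /corner_sum (big_cat_nat (leq0n (N - J)) (leq_subr J N)) /=.
apply: (@le_trans _ _ (W * e' + e' * B)).
  apply: lerD.
    apply: (@le_trans _ _ (\sum_(0 <= k < N - J) w k * e')).
      by apply: ler_sum_nat => k /andP[_ kNJ]; rewrite -mulr_sumr ler_wpM2l // tail_b //; lia.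
    by rewrite -mulr_suml ler_wpM2r ?(ltW e'0) // big_mkord sum_w_le.
  apply: (@le_trans _ _ (\sum_(N - J <= k < N) w k * B)).
    by apply: ler_sum_nat => k _; rewrite -mulr_sumr ler_wpM2l ?nneg_series_segment_le.
  by rewrite -mulr_suml ler_wpM2r // tail_w //; lia.
rewrite [W * _]mulrC -mulrDr /e' -mulrA ger_pMr // ler_pdivrMl // mulr1.
by rewrite lerDl ler01.
Qed.

Lemma corner_vanishing_dominated F w b (W B : C) :
  (forall k, 0 <= w k) -> (forall n, \sum_(k < n) w k <= W) ->
  (forall k, 0 <= b k) -> (forall n, \sum_(k < n) b k <= B) ->
  (forall k m, `|F k m| <= w k * b m) -> corner_vanishing F.
Proof.
move=> w_ge0 sum_w_le b_ge0 sum_b_le F_le e e0.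
have [N0 small] := corner_sum_mul_small w_ge0 sum_w_le b_ge0 sum_b_le e0.
exists N0 => N M N0N _; apply: le_trans (small N M N0N).
apply: le_trans (ler_norm_sum _ _ _) _; apply: ler_sum_nat => k _.
by apply: le_trans (ler_norm_sum _ _ _) _; apply: ler_sum_nat.
Qed.

Lemma row_sums_cvg F (r : nat -> C) (L : C) :
  (forall k, cvg_to (fun M => \sum_(m < M) F k m) (r k)) ->
  (forall N, triangle_sum F N.+1 = L) -> corner_vanishing F ->
  cvg_to (fun N => \sum_(k < N) r k) L.
Proof.
move=> row_cvg triangleE corner e e0.
have [N0 small] := corner (e / 2) (divr_gt0 e0 (ltr0n _ 2)).
exists N0.+1 => -[//|N] N0N; apply: le_lt_trans (_ : e / 2 < e); last first.
  by rewrite ltr_pdivrMr ?ltr0n // ltr_pMr // ltr1n.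
have rows_cvg := cvg_to_sum N.+1 row_cvg.
apply: (cvg_to_dist_le rows_cvg); exists N.+1 => M NM.
by rewrite sum_rows_split // triangleE addrC addKr small // ltnW.
Qed.

End CornerSums.

Section GammaConvolution.
Variable R : realType.
Local Notation C := (complex R).
Variable u : int -> C.
Hypothesis u0_neq0 : u 0 != 0.

Local Notation d n := (uddp u (Posz n)).
Local Notation cp j n := (convpow u j (Posz n)).
Local Notation g n := (gammau u (Posz n)).

Lemma uddp0 : uddp u 0 = 0.
Proof. by rewrite /uddp divff // subrr. Qed.

Lemma convpowS j n : cp j.+1 n = \sum_(0 <= k < n.+1) d (n - k)%N * cp j k.
Proof. by apply: eq_big_nat => k /andP[_ kn]; rewrite /= subzn. Qed.

Lemma convpow_eq0 j n : (n < j)%N -> cp j n = 0.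
Proof.
elim: j n => [//|j IH] n nj; rewrite convpowS big_nat_recr //= subnn uddp0 mul0r addr0.
rewrite big1_seq // => k /andP[_]; rewrite mem_index_iota => /andP[_ kn].
by rewrite IH ?mulr0 //; lia.
Qed.

Lemma gammau_sum_convpow J n : (n <= J)%N -> g n = \sum_(0 <= j < J.+1) cp j n.
Proof.
move=> nJ; rewrite /gammau /= (big_cat_nat (leq0n n.+1) (_ : n < J.+1)%N) //=.
rewrite [X in _ = _ + X]big1_seq ?addr0 // => j /andP[_].
by rewrite mem_index_iota => /andP[nj _]; rewrite convpow_eq0.
Qed.

Lemma uddp_conv_gammau n :
  \sum_(0 <= k < n.+1) d (n - k)%N * g k = g n - (n == 0)%:R.
Proof.
transitivity (\sum_(0 <= j < n.+1) \sum_(0 <= k < n.+1) d (n - k)%N * cp j k).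
  rewrite exchange_big_nat; apply: eq_big_nat => k /andP[_ kn].
  by rewrite (gammau_sum_convpow (J := n)) ?mulr_sumr.
have cp0 : cp 0 n = (n == 0)%:R by [].
rewrite (gammau_sum_convpow (leqnSn n)) [in RHS]big_nat_recl // cp0 addrAC subrr add0r.
by apply: eq_big_nat => j _; rewrite convpowS.
Qed.

Lemma u_uddp m : u (Posz m) = u 0 * ((m == 0)%:R - d m).
Proof. by rewrite /uddp opprB addrCA subrr addr0 mulrC divfK. Qed.

Lemma gammau_conv_u n :
  \sum_(0 <= k < n.+1) g k * u (Posz (n - k)) = u 0 * (n == 0)%:R.
Proof.
transitivity (u 0 * (\sum_(0 <= k < n.+1) g k * ((n - k)%N == 0)%:R -
                     \sum_(0 <= k < n.+1) d (n - k)%N * g k)).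
  rewrite -sumrB mulr_sumr; apply: eq_big_nat => k _.
  by rewrite u_uddp mulrCA mulrBr [gammau _ _ * uddp _ _]mulrC.
rewrite uddp_conv_gammau big_nat_recr //= subnn mulr1 big1_seq ?add0r ?subKr //.
move=> k /andP[_]; rewrite mem_index_iota => /andP[_ kn].
by rewrite subn_eq0 leqNgt kn mulr0.
Qed.

End GammaConvolution.

Section Reconstruction.
Variable R : realType.
Local Notation C := (complex R).
Variables (Q : R -> C) (u : int -> C).

(* The (k, m) term of sum_k gamma(k) R(xi - k) = sum_k gamma(k) sum_m Q(xi - k - m) u(m). *)
Definition double_series_term (xi : R) k m :=
  Q (xi - (k + m)%N%:R) * u (Posz m) * gammau u (Posz k).

Lemma triangle_sum_double_series xi N : u 0 != 0 ->
  triangle_sum (double_series_term xi) N.+1 = u 0 * Q xi.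
Proof.
move=> u0_neq0.
have antidiagE n : \sum_(0 <= k < n.+1) double_series_term xi k (n - k)%N =
                   Q (xi - n%:R) * (u 0 * (n == 0)%:R).
  rewrite -gammau_conv_u // mulr_sumr; apply: eq_big_nat => k /andP[_ kn].
  by rewrite /double_series_term subnKC // -mulrA [u _ * _]mulrC.
rewrite triangle_sum_antidiag big_nat_recl // antidiagE subr0 mulr1 mulrC.
by rewrite big1 ?addr0 // => n _; rewrite antidiagE mulr0 mulr0.
Qed.

Lemma left_support_shift_eq0 xi0 : (forall x, x < xi0 -> Q x = 0) ->
  forall x, exists K, forall m, (K <= m)%N -> Q (x - m%:R) = 0.
Proof.
move=> Q0 x; exists (Num.truncn (x - xi0)).+1 => m Km; apply: Q0.
by rewrite ltrBlDr -ltrBlDl (lt_le_trans (truncnS_gt _)) // ler_nat.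
Qed.

Lemma left_support_row_cvg xi0 : (forall x, x < xi0 -> Q x = 0) ->
  forall x, exists l, cvg_to (fun M => \sum_(m < M) Q (x - m%:R) * u (Posz m)) l.
Proof.
move=> /left_support_shift_eq0 Q0 x; have [K QK0] := Q0 x.
exists (\sum_(m < K) Q (x - m%:R) * u (Posz m)).
by apply: (eventually0_series_cvg (a := fun m => Q (x - m%:R) * u (Posz m))) => m /QK0->;
  rewrite mul0r.
Qed.

Lemma bounded_row_cvg (Mq Ub : C) : (forall x, `|Q x| <= Mq) ->
  (forall N, \sum_(k < N) `|u (Posz k)| <= Ub) ->
  forall x, exists l, cvg_to (fun M => \sum_(m < M) Q (x - m%:R) * u (Posz m)) l.
Proof.
move=> Q_le sum_u_le x.
apply: (abs_summable_cvg (a := fun m => Q (x - m%:R) * u (Posz m)) (B := Mq * Ub)) => n.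
apply: le_trans (_ : \sum_(k < n) Mq * `|u (Posz k)| <= _).
  by apply: ler_sum => k _; rewrite normrM ler_wpM2r.
by rewrite -mulr_sumr ler_wpM2l // (le_trans (normr_ge0 (Q 0))).
Qed.

Lemma left_support_corner_vanishing xi xi0 : (forall x, x < xi0 -> Q x = 0) ->
  corner_vanishing (double_series_term xi).
Proof.
move=> /left_support_shift_eq0 /(_ xi)[K QK0].
apply: (corner_vanishing_eventually0 (K := K)) => k m Kkm.
by rewrite /double_series_term QK0 ?mul0r.
Qed.

Hypothesis Q_homo : {homo Q : x y / x <= y}.

Lemma gammau_abs_summable y (A : C) : Q y < 0 ->
  (forall N, \sum_(k < N) `|gammau u (Posz k) * Q (y - k%:R)| <= A) ->
  forall N, \sum_(k < N) `|gammau u (Posz k)| <= A / `|Q y|.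
Proof.
move=> Qy_lt0 sum_le N; have Qy_gt0 : 0 < `|Q y| by rewrite normr_gt0 lt_eqF.
rewrite ler_pdivlMr // mulr_suml; apply: le_trans (sum_le N).
apply: ler_sum => k _; rewrite normrM ler_wpM2l //.
have Qk_le : Q (y - k%:R) <= Q y by apply: Q_homo; rewrite lerBlDr lerDl.
by rewrite !ler0_norm ?lerN2 ?(ltW Qy_lt0) ?(le_trans Qk_le (ltW Qy_lt0)).
Qed.

Lemma monotone_corner_vanishing xi (Mq Ub : C) :
  (forall x, `|Q x| <= Mq) -> (forall x, Q x \is Num.real) ->
  (forall N, \sum_(k < N) `|u (Posz k)| <= Ub) ->
  (forall y, exists A : C,
     forall N, \sum_(k < N) `|gammau u (Posz k) * Q (y - k%:R)| <= A) ->
  corner_vanishing (double_series_term xi).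
Proof.
(* If Q >= 0, monotonicity gives |Q(xi - k - m)| <= |Q(xi - k)|; otherwise some
   Q(y) < 0 makes gamma itself absolutely summable and the bound |Q| <= Mq suffices. *)
move=> Q_le Q_real sum_u_le gQ_summable.
have u_ge0 m : 0 <= `|u (Posz m)| by [].
have [Q_ge0|/boolp.existsNP[y /negP Qy_ge0]] := boolp.pselect (forall x, 0 <= Q x).
  have [A sum_le] := gQ_summable xi.
  apply: (corner_vanishing_dominated
           (w := fun k => `|gammau u (Posz k) * Q (xi - k%:R)|) _ sum_le u_ge0 sum_u_le) => // k m.
  rewrite /double_series_term !normrM mulrAC ler_wpM2r // mulrC ler_wpM2l //.
  by rewrite !ger0_norm ?Q_homo // lerD2l lerN2 ler_nat leq_addr.
have Qy_lt0 : Q y < 0 by rewrite real_ltNge ?Q_real.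
have [A sum_le] := gQ_summable y.
have Mq_ge0 : 0 <= Mq := le_trans (normr_ge0 _) (Q_le 0).
apply: (@corner_vanishing_dominated _ _ (fun k => `|gammau u (Posz k)| * Mq) _
          (A / `|Q y| * Mq) _ _ _ u_ge0 sum_u_le) => [k|n|k m].
- by rewrite mulr_ge0.
- by rewrite -mulr_suml ler_wpM2r ?(gammau_abs_summable Qy_lt0 sum_le).
- by rewrite /double_series_term !normrM mulrAC ler_wpM2r // mulrC ler_wpM2l.
Qed.

End Reconstruction.

Section IntegerSums.
Variable R : realType.
Local Notation C := (complex R).

Lemma zsum_to_nat (f : int -> C) S : series_to (fun k => f (Posz k)) S ->
  (forall k, f (- Posz k.+1) = 0) -> zsum_to f S.
Proof.
move=> f_cvg f0; exists S, 0; split=> //; split; last by rewrite addr0.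
apply: series_to_partial_sums; apply: eq_cvg_to (cvg_to_cst 0) => n.
by rewrite big1 // => k _; rewrite f0.
Qed.

Lemma zabs_summable_nat (f : int -> C) : zabs_summable f ->
  exists B : C, forall N, \sum_(k < N) `|f (Posz k)| <= B.
Proof.
move=> [M sum_le]; exists M%:C%C => N; apply: le_trans (sum_le N).
by apply: ler_sum => k _; rewrite lerDl.
Qed.

End IntegerSums.

Unset Implicit Arguments.

Theorem theorem2 (R : realType) (Q : R -> complex R) (u : int -> complex R)
  (HQb : exists M : R, forall x : R, `|Q x| <= (M%:C)%C)
  (Hu_neg : forall z : int, z < 0 -> u z = 0)
  (Hu0 : u 0 != 0)
  (Hcase :
     (exists xi0 : R, forall xi : R, xi < xi0 -> Q xi = 0)
     \/
     [/\ (forall x : R, Q x \is Num.real),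
         (forall x y : R, x <= y -> Q x <= Q y),
         zabs_summable u &
         (forall xi : R, zabs_summable (fun z => gammau u z * Q (xi - z%:~R)))]) :
  exists Rf : R -> complex R,
    (forall xi : R, zsum_to (fun z => Q (xi - z%:~R) * u z) (Rf xi)) /\
    (forall xi : R, exists S : complex R,
        zsum_to (fun z => Rf (xi - z%:~R) * gammau u z) S /\
        Q xi = (u 0)^-1 * S).
Proof.
have [Mq Q_le] := HQb.
have row_cvg x : exists l, cvg_to (fun M => \sum_(m < M) Q (x - m%:R) * u (Posz m)) l.
  case: Hcase => [[xi0 Q0]|[_ _ /zabs_summable_nat[Ub sum_u_le] _]].
    exact: left_support_row_cvg Q0 x.
  exact: bounded_row_cvg Q_le sum_u_le x.
have corner xi : corner_vanishing (double_series_term Q u xi).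
  case: Hcase => [[xi0 Q0]|[Q_real Q_homo /zabs_summable_nat[Ub sum_u_le] gQ]].
    exact: left_support_corner_vanishing Q0.
  apply: monotone_corner_vanishing Q_le Q_real sum_u_le _ => // y.
  exact: zabs_summable_nat (gQ y).
have [Rf Rf_cvg] := boolp.choice row_cvg.
exists Rf; split=> [xi|xi].
  apply: zsum_to_nat => [|k]; first exact: series_to_partial_sums.
  by rewrite Hu_neg ?mulr0.
exists (u 0 * Q xi); split; last by rewrite mulKf.
apply: zsum_to_nat => [|k]; last by rewrite /gammau mulr0.
apply: series_to_partial_sums.
apply: (row_sums_cvg (r := fun k => Rf (xi - k%:R) * gammau u (Posz k))
          _ (fun N => triangle_sum_double_series Q xi N Hu0) (corner xi)) => k.
apply: eq_cvg_to (cvg_toMr (gammau u (Posz k)) (Rf_cvg (xi - k%:R))) => M.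
by rewrite mulr_suml; apply: eq_bigr => m _; rewrite /double_series_term natrD opprD addrA.
Qed.
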